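(* Let $f\in\mathcal F^{\,r}_{op}$ and $k\ge1$. The following are equivalent: (i) $I^{SLD}_\rho(A)\le k\,I^f_\rho(A)$ for every $n$, every faithful $\rho\in\mathcal D^1_n$ and every self-adjoint $A\in M_n(\mathbb C)$; (ii) $m_{\tilde f}(x,y)\le\big(1-\frac1k\big)\frac{x+y}{2}+\frac1k\cdot\frac{2xy}{x+y}$ for all $x,y>0$; (iii) $f(x)\le 2kf(0)\cdot\frac{1+x}{2}$ for all $x>0$.
   Context: $\mathcal F_{op}$ is the class of functions $f:(0,\infty)\to(0,\infty)$ that are operator monotone, satisfy $f(1)=1$ and $tf(t^{-1})=f(t)$ for all $t>0$. $f(0):=\lim_{x\to0^+}f(x)$, and $\mathcal F^{\,r}_{op}=\{f\in\mathcal F_{op}: f(0)\neq0\}$. For $f\in\mathcal F^{\,r}_{op}$ and $x>0$, $\tilde f(x):=\frac12\big[(x+1)-(x-1)^2\frac{f(0)}{f(x)}\big]$ (this $\tilde f$ again belongs to $\mathcal F_{op}$). For any $g\in\mathcal F_{op}$ and $x,y>0$, $m_g(x,y)=xg(y/x)$. $\mathcal D_n^1$ is the set of strictly positive $n\times n$ density matrices. $L_\rho(X)=\rho X$, $R_\rho(X)=X\rho$, and $m_f(L_\rho,R_\rho)$ multiplies the entry $X_{ij}$ of $X$ (in an orthonormal eigenbasis of $\rho$ with eigenvalues $\lambda_i$) by $m_f(\lambda_i,\lambda_j)$. $\|X\|^2_{\rho,f}=\mathrm{Tr}\big(X^* m_f(L_\rho,R_\rho)^{-1}(X)\big)$. The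 $f$-information is $I^f_\rho(A)=\frac{f(0)}{2}\|i[\rho,A]\|^2_{\rho,f}$, and $I^{SLD}_\rho:=I^{f_{SLD}}_\rho$ with $f_{SLD}(x)=\frac{1+x}{2}$ (equivalently $\frac14\mathrm{Tr}(\rho L^2)$, $L=2(L_\rho+R_\rho)^{-1}(i[\rho,A])$). *)

From mathcomp Require Import all_boot all_algebra.
From mathcomp Require Import boolp classical_sets reals topology normedtype.
From mathcomp.real_closed Require Import complex.

Set Implicit Arguments.
Unset Strict Implicit.
Unset Printing Implicit Defensive.

Import GRing.Theory Num.Theory numFieldNormedType.Exports.
Local Open Scope ring_scope.
Local Open Scope classical_set_scope.

Section QuantumInfo.
Variable R : realType.
Local Notation C := R[i].

Definition adj {m n} (M : 'M[C]_(m, n)) : 'M[C]_(n, m) := (M ^t* )%sesqui.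

(* Loewner order: A <= B iff B - A is positive semidefinite,
   i.e. v (B - A) v^* >= 0 for all vectors v (over C this forces B - A
   to be self-adjoint). *)
Definition loewner_le {n} (A B : 'M[C]_n) : Prop :=
  forall v : 'rV[C]_n, 0 <= (v *m (B - A) *m adj v) 0 0.

Definition herm_of {n} (U : 'M[C]_n) (d : 'rV[R]_n) : 'M[C]_n :=
  U *m diag_mx (map_mx (fun x : R => x%:C%C) d) *m adj U.

(* Operator monotone on (0,oo): for every n and positive definite matrices
   A <= B one has f(A) <= f(B), where f(A) is defined by the functional
   calculus through any spectral decomposition A = U diag(d) U^*. *)
Definition operator_monotone (f : R -> R) : Prop :=
  forall (n : nat) (U V : 'M[C]_n) (d e : 'rV[R]_n),
    U \is unitarymx -> V \is unitarymx ->
    (forall i, 0 < d 0 i) -> (forall i, 0 < e 0 i) ->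
    loewner_le (herm_of U d) (herm_of V e) ->
    loewner_le (herm_of U (map_mx f d)) (herm_of V (map_mx f e)).

Definition f0 (f : R -> R) : R := lim (f x @[x --> 0^'+]).

Definition Fop (f : R -> R) : Prop :=
  [/\ operator_monotone f,
      (forall x, 0 < x -> 0 < f x),
      f 1 = 1 &
      (forall x, 0 < x -> x * f x^-1 = f x)].

Definition Fop_r (f : R -> R) : Prop := Fop f /\ f0 f != 0.

Definition ftilde (f : R -> R) (x : R) : R :=
  ((x + 1) - (x - 1) ^+ 2 * (f0 f / f x)) / 2.

Definition mean_of (g : R -> R) (x y : R) : R := x * g (y / x).

Definition f_SLD (x : R) : R := (1 + x) / 2.

Definition selfadj {n} (A : 'M[C]_n) : Prop := A = adj A.

Definition faithful_density {n} (rho : 'M[C]_n) : Prop :=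
  [/\ selfadj rho,
      (forall v : 'rV[C]_n, v != 0 -> 0 < (v *m rho *m adj v) 0 0) &
      \tr rho = 1].

(* m_g(L_rho, R_rho)^{-1}(X), computed in the orthonormal eigenbasis of rho
   given by the columns of U, where rho = U diag(lam) U^*. *)
Definition mLR_inv (g : R -> R) {n} (U : 'M[C]_n) (lam : 'rV[R]_n)
    (X : 'M[C]_n) : 'M[C]_n :=
  U *m (\matrix_(i, j) ((adj U *m X *m U) i j
                         / (mean_of g (lam 0 i) (lam 0 j))%:C%C)) *m adj U.

Definition norm2 (g : R -> R) {n} (U : 'M[C]_n) (lam : 'rV[R]_n)
    (X : 'M[C]_n) : R :=
  complex.Re (\tr (adj X *m mLR_inv g U lam X)).

Definition info (g : R -> R) {n} (U : 'M[C]_n) (lam : 'rV[R]_n)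
    (A : 'M[C]_n) : R :=
  let rho := herm_of U lam in
  f0 g / 2 * norm2 g U lam ('i%C *: (rho *m A - A *m rho)).

End QuantumInfo.

(* Everything reduces to the pointwise bound m_f(x, y) <= k f(0) (x + y), i.e.
   f t <= k f(0) (1 + t).  In an eigenbasis of rho the information I^g_rho(A) is
   g(0)/2 times the sum of (l_j - l_i)^2 |A_ji|^2 / m_g(l_j, l_i), so the bound
   gives (i) term by term, while the two-level state diag(1, t)/(1 + t) with
   A = sigma_x isolates a single term and recovers the bound.  The right-hand
   side of (ii) minus m_ftilde(x, y) equals
   (x - y)^2 (k f(0) (x + y) - m_f(x, y)) / (2 k (x + y) m_f(x, y)),
   whence (ii) <-> (iii).  Both test families degenerate at t = 1; there the
   bound follows by monotonicity of f, from f 1 <= f s <= k f(0) (1 + s), s > 1. *)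

From mathcomp Require Import all_boot all_algebra.
From mathcomp Require Import boolp classical_sets reals topology normedtype.
From mathcomp.real_closed Require Import complex.
From mathcomp Require Import order spectral ring lra.
Set Implicit Arguments.
Unset Strict Implicit.
Unset Printing Implicit Defensive.

Import Order.TTheory GRing.Theory Num.Theory numFieldNormedType.Exports.
Local Open Scope ring_scope.

Section Adjoint.
Context {R : realType}.
Local Notation C := R[i].

Lemma adjM m n p (A : 'M[C]_(m, n)) (B : 'M[C]_(n, p)) :
  adj (A *m B) = adj B *m adj A.
Proof. by rewrite /adj trmx_mul map_mxM. Qed.

Lemma adjK m n (A : 'M[C]_(m, n)) : adj (adj A) = A.
Proof. exact: trmxCK. Qed.

Lemma adj1 n : adj (1%:M : 'M[C]_n) = 1%:M.
Proof. by rewrite /adj trmx1 map_mx1. Qed.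

Lemma adj_unitarymxK n (U : 'M[C]_n) : U \is unitarymx -> adj U *m U = 1%:M.
Proof. by move=> uU; rewrite -[adj U]mul1mx /adj mulmxKtV. Qed.

Lemma unitarymx1 n : (1%:M : 'M[C]_n) \is unitarymx.
Proof. by apply/unitarymxP; rewrite -/(adj _) adj1 mulmx1. Qed.

End Adjoint.

Section SpectralFormula.
Context {R : realType}.
Local Notation C := R[i].

Lemma Re_commutator_entry (x y m : R) (b : C) :
  complex.Re (('i%C * (x%:C%C * b - b * y%:C%C))^* * ('i%C * (x%:C%C * b - b * y%:C%C) / m%:C%C))
  = (x - y) ^+ 2 * complex.Re (b^* * b) / m.
Proof.
case: b => a c /=.
have [->|m0] := eqVneq m 0; last by field.
by rewrite !(mul0r, invr0, mulr0, oppr0, subr0, addr0).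
Qed.

Lemma Re_mul_conjC_ge0 (b : C) : 0 <= complex.Re (b^* * b).
Proof. by have := mul_conjC_ge0 b; rewrite mulrC lecE => /andP[]. Qed.

Lemma info_spectral (g : R -> R) n (U A : 'M[C]_n) (lam : 'rV[R]_n) :
  U \is unitarymx ->
  info g U lam A = f0 g / 2 * \sum_i \sum_j
     ((lam 0 j - lam 0 i) ^+ 2 * complex.Re (((adj U *m A *m U) j i)^* * (adj U *m A *m U) j i)
        / mean_of g (lam 0 j) (lam 0 i)).
Proof.
move=> uU; rewrite /info /norm2 /herm_of; congr (_ * _).
set D := diag_mx _; set B := adj U *m A *m U; set X := 'i%C *: _.
set Y := adj U *m X *m U.
have eY : Y = 'i%C *: (D *m B - B *m D).
  rewrite /Y /X -scalemxAr -scalemxAl mulmxBr mulmxBl /B; congr (_ *: (_ - _)).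
    by rewrite !mulmxA adj_unitarymxK // mul1mx.
  by rewrite !mulmxA -(mulmxA _ (adj U) U) adj_unitarymxK // mulmx1.
rewrite /mLR_inv -/Y; set M := \matrix_(i, j) _.
have -> : \tr (adj X *m (U *m M *m adj U)) = \tr (adj Y *m M).
  by rewrite mulmxA mxtrace_mulC /Y !adjM adjK !mulmxA.
rewrite /M /adj eY mul_diag_mx mul_mx_diag; clearbody B.
rewrite /mxtrace raddf_sum; apply: eq_bigr => i _.
rewrite mxE raddf_sum; apply: eq_bigr => j _.
by rewrite !mxE; exact: Re_commutator_entry.
Qed.

Lemma faithful_spectrum_gt0 n (rho U : 'M[C]_n) (lam : 'rV[R]_n) :
  faithful_density rho -> U \is unitarymx -> rho = herm_of U lam ->
  forall i, 0 < lam 0 i.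
Proof.
move=> [_ rho_pos _] uU rhoE i; subst rho.
set e : 'rV[C]_n := delta_mx 0 i.
have /rho_pos : e *m adj U != 0.
  apply/negP => /eqP /(congr1 (mulmx^~ U)).
  rewrite -mulmxA adj_unitarymxK // mulmx1 mul0mx => /matrixP /(_ 0 i).
  by rewrite !mxE !eqxx /= => /eqP; rewrite oner_eq0.
rewrite /herm_of adjM adjK !mulmxA -(mulmxA e (adj U) U) adj_unitarymxK // mulmx1.
rewrite -(mulmxA _ (adj U) U) adj_unitarymxK // mulmx1.
rewrite /e -rowE row_diag_mx -scalemxAl /adj trmx_delta map_delta_mx mul_delta_mx.
by rewrite !mxE !eqxx /= mulr1 ltcR.
Qed.

Lemma diag_mx_pos n (lam : 'rV[R]_n) : (forall i, 0 < lam 0 i) ->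
  forall v : 'rV[C]_n, v != 0 ->
  0 < (v *m diag_mx (map_mx (fun x : R => x%:C%C) lam) *m adj v) 0 0.
Proof.
move=> lam_gt0 v v_neq0.
have [j0 vj0] : exists j, v 0 j != 0.
  apply/existsP; apply: contraNT v_neq0 => /existsPn v0.
  by apply/eqP/matrixP => i j; rewrite ord1 mxE; apply/eqP; rewrite -[_ == 0]negbK v0.
rewrite mul_mx_diag mxE (bigD1 j0) //=; apply: ltr_wpDr.
  apply: sumr_ge0 => j _; rewrite !mxE mulrAC.
  by apply: mulr_ge0; rewrite ?mul_conjC_ge0 // lecR ltW.
by rewrite !mxE mulrAC; apply: mulr_gt0; rewrite ?mul_conjC_gt0 // ltcR.
Qed.

End SpectralFormula.

Section ScalarFacts.
Context {R : realType}.
Local Notation C := R[i].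

Lemma quad_form11 (v M : 'M[C]_1) :
  (v *m M *m adj v) 0 0 = v 0 0 * M 0 0 * (v 0 0)^*.
Proof. by rewrite !(mxE, big_ord1). Qed.

Lemma loewner_le_const1 (u w : R) :
  loewner_le (herm_of (1%:M : 'M[C]_1) (const_mx u)) (herm_of 1%:M (const_mx w))
  <-> u <= w.
Proof.
rewrite /loewner_le /herm_of !mul1mx !adj1 !mulmx1; split=> [/(_ (const_mx 1))|uw v].
  by rewrite quad_form11 !mxE /= !mulr1n mul1r conjC1 mulr1 -rmorphB lecR subr_ge0.
rewrite quad_form11 !mxE /= !mulr1n -rmorphB mulrAC.
by apply: mulr_ge0; rewrite ?mul_conjC_ge0 // lecR subr_ge0.
Qed.

Lemma operator_monotone_le (f : R -> R) : operator_monotone f ->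
  forall a b, 0 < a -> a <= b -> f a <= f b.
Proof.
move=> f_mono a b a_gt0 ab.
have b_gt0 : 0 < b by exact: lt_le_trans ab.
apply/loewner_le_const1; rewrite -!map_const_mx.
by apply: f_mono; rewrite ?unitarymx1 // ?loewner_le_const1 // => i; rewrite mxE.
Qed.

Lemma f0_SLD : f0 (@f_SLD R) = 2^-1.
Proof.
rewrite /f0 /f_SLD.
suff -> : lim ((1 + x) / 2 @[x --> (0:R)^'+])%classic = (1 + 0) / 2 by rewrite addr0 mul1r.
apply: cvg_lim => //; apply: cvg_at_right_filter.
by apply: cvgM; [apply: cvgD; [exact: cvg_cst | exact: cvg_id] | exact: cvg_cst].
Qed.

Lemma mean_of_SLD (x y : R) : x != 0 -> mean_of (@f_SLD R) x y = (x + y) / 2.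
Proof. by move=> x_neq0; rewrite /mean_of /f_SLD; field. Qed.

Lemma le_double_of_forall_gt1 (a c : R) :
  (forall s, 1 < s -> a <= c * (1 + s)) -> a <= 2 * c.
Proof.
move=> h; have [c_le0|c_gt0] := leP c 0.
  by have := h 2 (ltr_nat _ 1 2); lra.
rewrite leNgt; apply/negP => a_gt.
pose s := (a + 2 * c) / (2 * c) - 1.
have s_gt1 : 1 < s by rewrite ltrBrDl ltr_pdivlMr ?mulr_gt0 //; lra.
have : c * (1 + s) = (a + 2 * c) / 2 by rewrite /s; field; rewrite gt_eqF.
by have := h s s_gt1; lra.
Qed.

Lemma le_linear_at1 (f : R -> R) (c : R) :
  (forall a b, 0 < a -> a <= b -> f a <= f b) ->
  (forall t, 0 < t -> t != 1 -> f t <= c * (1 + t)) ->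
  forall t, 0 < t -> f t <= c * (1 + t).
Proof.
move=> f_mono h t t_gt0; have [->|] := eqVneq t 1; last exact: h.
rewrite [1 + 1](_ : _ = 2) // mulrC; apply: le_double_of_forall_gt1 => s s_gt1.
have s_gt0 : 0 < s by exact: lt_trans s_gt1.
exact: le_trans (f_mono _ _ ltr01 (ltW s_gt1)) (h _ s_gt0 (negbT (gt_eqF s_gt1))).
Qed.

Lemma mean_of_le_linear (f : R -> R) (c x y : R) :
  (forall t, 0 < t -> f t <= c * (1 + t)) -> 0 < x -> 0 < y ->
  mean_of f x y <= c * (x + y).
Proof.
move=> h x_gt0 y_gt0; rewrite /mean_of.
have -> : c * (x + y) = x * (c * (1 + y / x)) by field; rewrite gt_eqF.
by rewrite ler_pM2l // h // divr_gt0.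
Qed.

End ScalarFacts.

Section InformationBounds.
Context {R : realType}.
Local Notation C := R[i].

Lemma SLD_term_le (k c a x y M : R) :
  0 <= a -> 0 < x + y -> 0 < M -> M <= k * c * (x + y) ->
  2^-1 / 2 * (a / ((x + y) / 2)) <= k * (c / 2) * (a / M).
Proof.
move=> a_ge0 xy_gt0 M_gt0 M_le; rewrite -subr_ge0.
have -> : k * (c / 2) * (a / M) - 2^-1 / 2 * (a / ((x + y) / 2))
    = a * (k * c * (x + y) - M) / (2 * (x + y) * M).
  by field; rewrite !gt_eqF.
by rewrite divr_ge0 ?mulr_ge0 ?subr_ge0 // ltW ?mulr_gt0.
Qed.

Lemma info_SLD_le_of_le_linear (f : R -> R) (k : R) :
  (forall x, 0 < x -> 0 < f x) ->
  (forall t, 0 < t -> f t <= k * f0 f * (1 + t)) ->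
  forall n (rho A U : 'M[C]_n) (lam : 'rV[R]_n),
    faithful_density rho -> selfadj A -> U \is unitarymx -> rho = herm_of U lam ->
    info (@f_SLD R) U lam A <= k * info f U lam A.
Proof.
move=> f_gt0 f_le n rho A U lam rho_fd _ uU rhoE.
have lam_gt0 := faithful_spectrum_gt0 rho_fd uU rhoE.
rewrite !info_spectral // f0_SLD mulrA !mulr_sumr; apply: ler_sum => i _.
rewrite !mulr_sumr; apply: ler_sum => j _.
rewrite mean_of_SLD ?gt_eqF //; apply: SLD_term_le.
- by rewrite mulr_ge0 ?sqr_ge0 ?Re_mul_conjC_ge0.
- by rewrite addr_gt0.
- by rewrite /mean_of mulr_gt0 ?f_gt0 ?divr_gt0.
- exact: mean_of_le_linear.
Qed.

Definition qubit_spectrum (t : R) : 'rV[R]_2 :=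
  \row_(i < 2) ((if i == ord0 then 1 else t) / (1 + t)).

Definition pauli_x : 'M[C]_2 := \matrix_(i, j) (if i == j then 0 else 1).

Lemma selfadj_pauli_x : selfadj pauli_x.
Proof.
apply/matrixP => i j; rewrite /adj !mxE eq_sym.
by case: (j == i); rewrite ?conjC0 ?conjC1.
Qed.

Lemma qubit_spectrum_gt0 (t : R) : 0 < t -> forall i, 0 < qubit_spectrum t 0 i.
Proof. by move=> t_gt0 i; rewrite mxE; case: ifP => _; rewrite divr_gt0 //; lra. Qed.

Lemma faithful_qubit (t : R) : 0 < t ->
  faithful_density (herm_of (1%:M : 'M[C]_2) (qubit_spectrum t)).
Proof.
move=> t_gt0; rewrite /herm_of mul1mx adj1 mulmx1; split.
- apply/matrixP => i j; rewrite /adj !mxE.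
  have [->|_] := eqVneq i j; last by rewrite /= !mulr0n conjC0.
  have := qubit_spectrum_gt0 t_gt0 j; rewrite mxE => lam_gt0.
  by rewrite /= !mulr1n geC0_conj // ler0c ltW.
- exact/diag_mx_pos/qubit_spectrum_gt0.
- rewrite mxtrace_diag big_ord_recr big_ord1 /= !mxE /= -rmorphD /=.
  by congr (_%:C%C); field; rewrite gt_eqF //; lra.
Qed.

Lemma info_qubit (g : R -> R) (t : R) :
  0 < t -> 0 < g t -> t * g t^-1 = g t ->
  info g 1%:M (qubit_spectrum t) pauli_x = f0 g * (t - 1) ^+ 2 / ((1 + t) * g t).
Proof.
move=> t_gt0 gt_gt0 g_sym.
rewrite info_spectral ?unitarymx1 // adj1 mul1mx mulmx1.
rewrite !big_ord_recr !big_ord0 /= !add0r !mxE /=.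
rewrite !subrr expr0n /= !mul0r !add0r !addr0 /mean_of.
have t_neq0 : t != 0 by rewrite gt_eqF.
have t1_neq0 : 1 + t != 0 by rewrite gt_eqF //; lra.
have -> : t / (1 + t) / (1 / (1 + t)) = t by field; rewrite t1_neq0.
have -> : 1 / (1 + t) / (t / (1 + t)) = t^-1 by field; rewrite t_neq0 t1_neq0.
have -> : g t^-1 = g t / t by rewrite -g_sym mulrAC mulfV // mul1r.
by field; rewrite t_neq0 t1_neq0 gt_eqF.
Qed.

Lemma f_SLD_symmetric (t : R) : 0 < t -> t * f_SLD t^-1 = f_SLD t.
Proof. by move=> t_gt0; rewrite /f_SLD; field; rewrite gt_eqF. Qed.

Lemma le_linear_of_info_SLD_le (f : R -> R) (k : R) :
  (forall x, 0 < x -> 0 < f x) -> (forall x, 0 < x -> x * f x^-1 = f x) ->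
  (forall n (rho A U : 'M[C]_n) (lam : 'rV[R]_n),
    faithful_density rho -> selfadj A -> U \is unitarymx -> rho = herm_of U lam ->
    info (@f_SLD R) U lam A <= k * info f U lam A) ->
  forall t, 0 < t -> t != 1 -> f t <= k * f0 f * (1 + t).
Proof.
move=> f_gt0 f_sym info_le t t_gt0 t_neq1.
have := info_le 2 _ pauli_x _ _ (faithful_qubit t_gt0) selfadj_pauli_x
  (unitarymx1 _) erefl.
have SLD_gt0 : 0 < @f_SLD R t by rewrite /f_SLD; lra.
rewrite !info_qubit ?f_gt0 ?f_sym ?f_SLD_symmetric // f0_SLD -subr_ge0.
have t1_gt0 : 0 < 1 + t by lra.
have -> : k * (f0 f * (t - 1) ^+ 2 / ((1 + t) * f t))
          - 2^-1 * (t - 1) ^+ 2 / ((1 + t) * f_SLD t)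
        = (t - 1) ^+ 2 / ((1 + t) ^+ 2 * f t) * (k * f0 f * (1 + t) - f t).
  by rewrite /f_SLD; field; rewrite !gt_eqF ?f_gt0.
have sq_gt0 : 0 < (t - 1) ^+ 2 by rewrite exprn_even_gt0 //= subr_eq0.
by rewrite pmulr_rge0 ?subr_ge0 // divr_gt0 // mulr_gt0 ?exprn_gt0 ?f_gt0.
Qed.

End InformationBounds.

Section TildeMean.
Context {R : realType}.

Lemma mean_of1 (g : R -> R) (t : R) : mean_of g 1 t = g t.
Proof. by rewrite /mean_of mul1r divr1. Qed.

Lemma mean_of_ftilde (f : R -> R) (x y : R) : x != 0 -> f (y / x) != 0 ->
  mean_of (ftilde f) x y = ((x + y) - (x - y) ^+ 2 * f0 f / mean_of f x y) / 2.
Proof. by move=> x_neq0 fyx_neq0; rewrite /mean_of /ftilde; field; apply/andP. Qed.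

Lemma ftilde_gap (k c x y M : R) : k != 0 -> x + y != 0 -> M != 0 ->
  (1 - k^-1) * ((x + y) / 2) + k^-1 * (2 * x * y / (x + y))
    - ((x + y) - (x - y) ^+ 2 * c / M) / 2
  = (x - y) ^+ 2 / (2 * k * (x + y) * M) * (k * c * (x + y) - M).
Proof. by move=> k_neq0 xy_neq0 M_neq0; field; rewrite k_neq0 xy_neq0 M_neq0. Qed.

Section Bounds.
Variables (f : R -> R) (k : R).
Hypotheses (k_gt0 : 0 < k) (f_gt0 : forall x, 0 < x -> 0 < f x).

Lemma ftilde_le_of_le_linear :
  (forall t, 0 < t -> f t <= k * f0 f * (1 + t)) ->
  forall x y, 0 < x -> 0 < y ->
    mean_of (ftilde f) x y <= (1 - k^-1) * ((x + y) / 2) + k^-1 * (2 * x * y / (x + y)).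
Proof.
move=> f_le x y x_gt0 y_gt0.
have fyx_gt0 : 0 < f (y / x) by rewrite f_gt0 ?divr_gt0.
have M_gt0 : 0 < mean_of f x y by rewrite mulr_gt0.
rewrite -subr_ge0 mean_of_ftilde ?gt_eqF // ftilde_gap ?gt_eqF ?addr_gt0 //.
rewrite mulr_ge0 ?subr_ge0 ?mean_of_le_linear // divr_ge0 ?sqr_ge0 //.
by rewrite ltW // !mulr_gt0 ?addr_gt0.
Qed.

Lemma le_linear_of_ftilde_le :
  (forall x y, 0 < x -> 0 < y ->
    mean_of (ftilde f) x y <= (1 - k^-1) * ((x + y) / 2) + k^-1 * (2 * x * y / (x + y))) ->
  forall t, 0 < t -> t != 1 -> f t <= k * f0 f * (1 + t).
Proof.
move=> ftilde_le t t_gt0 t_neq1.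
have ft_gt0 := f_gt0 t_gt0.
have := ftilde_le 1 t ltr01 t_gt0.
rewrite -subr_ge0 mean_of_ftilde ?divr1 ?gt_eqF // ftilde_gap ?gt_eqF ?addr_gt0 ?mean_of1 //.
have sq_gt0 : 0 < (1 - t) ^+ 2 by rewrite exprn_even_gt0 //= subr_eq0 eq_sym.
by rewrite pmulr_rge0 ?subr_ge0 // divr_gt0 // !mulr_gt0 ?addr_gt0.
Qed.

End Bounds.
End TildeMean.

Theorem mainTheorem6 (R : realType) (f : R -> R) (k : R) :
  Fop_r f -> 1 <= k ->
  let I := (forall (n : nat) (rho A U : 'M[R[i]]_n) (lam : 'rV[R]_n),
              faithful_density rho -> selfadj A ->
              U \is unitarymx -> rho = herm_of U lam ->
              info (@f_SLD R) U lam A <= k * info f U lam A) in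
  let II := (forall x y : R, 0 < x -> 0 < y ->
               mean_of (ftilde f) x y
               <= (1 - k^-1) * ((x + y) / 2) + k^-1 * (2 * x * y / (x + y))) in
  let III := (forall x : R, 0 < x -> f x <= 2 * k * f0 f * ((1 + x) / 2)) in
  (I <-> II) /\ (II <-> III).
Proof.
move=> [[f_opmono f_gt0 _ f_sym] _] k_ge1 I II III.
have k_gt0 : 0 < k by lra.
have f_mono := operator_monotone_le f_opmono.
have III_iff : III <-> forall t, 0 < t -> f t <= k * f0 f * (1 + t).
  have e t : 2 * k * f0 f * ((1 + t) / 2) = k * f0 f * (1 + t) by field.
  by split=> le t /le; rewrite e.
have I_III := le_linear_at1 f_mono (le_linear_of_info_SLD_le f_gt0 f_sym (k := k) _).
have II_III := le_linear_at1 f_mono (le_linear_of_ftilde_le k_gt0 f_gt0 _).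
have III_I := info_SLD_le_of_le_linear f_gt0 (k := k).
have III_II := ftilde_le_of_le_linear k_gt0 f_gt0.
rewrite III_iff; split; split.
- by move/I_III/III_II.
- by move/II_III/III_I.
- exact: II_III.
- exact: III_II.
Qed.
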